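(* Let $N\ge2$, $b_1,\dots,b_N\in\{0,1\}$ with $b_N=1$ and $\sum_j b_j2^{N-j}>1$, and let $\rho$ be the largest real root of $x^N-\sum_{j=1}^N b_jx^{N-j}$ (so $1<\rho<2$). Let $Z[\rho]$ denote the set of numbers $\sum_{k=0}^n z_k\rho^k$ with $n\ge0$ and $z_k\in\{0,1\}$. Then $2\notin Z[\rho]$. *)

From mathcomp Require Import all_boot all_order all_algebra.
From mathcomp Require Import reals.
Set Implicit Arguments. Unset Strict Implicit. Unset Printing Implicit Defensive.
Import Order.TTheory GRing.Theory Num.Theory.
Local Open Scope ring_scope.

Definition beta_poly (R : realType) (N : nat) (b : nat -> bool) : {poly R} :=
  'X^N - \sum_(1 <= j < N.+1) (b j)%:R *: 'X^(N - j).

Definition largest_real_root (R : realType) (p : {poly R}) (rho : R) : Prop :=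
  root p rho /\ (forall x : R, root p x -> x <= rho).

Definition Zrho (R : realType) (rho : R) (y : R) : Prop :=
  exists (n : nat) (z : nat -> bool),
    y = \sum_(0 <= k < n.+1) (z k)%:R * rho ^+ k.

From mathcomp Require Import all_boot all_order all_algebra.
From mathcomp Require Import reals zify ring lra.
Set Implicit Arguments. Unset Strict Implicit. Unset Printing Implicit Defensive.
Import Order.TTheory GRing.Theory Num.Theory.
Local Open Scope ring_scope.

(* If 2 lay in Z[rho] then, as rho > 1, it would be a single power rho^M = 2
   with M >= 1, since two distinct powers already sum to more than 1 + rho > 2.
   But rho is a root of a monic integer polynomial with odd constant term
   -b_N. Folding its exponents with rho^M = 2 gives a relation
   sum_(r < M) c_r rho^r = 0 with c_0 odd. The matrix of multiplication by
   this element in the basis 1, rho, ..., rho^(M-1) is then singular, while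
   modulo 2 it is triangular with diagonal c_0, so its determinant is odd.
   That rho > 1 follows from the intermediate value theorem, as the polynomial
   is negative at 1 (at least two b_j equal 1) and nonnegative at 2. *)

Section PowerEqualTwo.
Variables (R : numFieldType) (m : nat) (x : R).
Hypothesis x_pow : x ^+ m.+1 = 2.
Implicit Types (c : 'I_m.+1 -> int) (i j r : 'I_m.+1) (a : nat -> int).

Lemma exprZpD r j :
  x ^+ (r + j : 'I_m.+1)%R * (if ((r + j : 'I_m.+1)%R < j)%N then 2 else 1) =
  x ^+ r * x ^+ j.
Proof.
rewrite -exprD (_ : nat_of_ord (r + j) = modn (r + j)%N m.+1) //.
have := ltn_ord r; have := ltn_ord j.
have [wrap|no_wrap] := leqP m.+1 (r + j) => j_lt r_lt.
  by rewrite -(subnK wrap) modnDr modn_small ?ifT ?exprD ?x_pow //; lia.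
by rewrite modn_small // ifF ?mulr1 //; lia.
Qed.

(* The matrix of multiplication by [\sum_r c r * x ^+ r] on the basis
   [x ^+ i]: wrapping around past [x ^+ m] costs a factor 2. *)
Definition pow2_mulmx c : 'M[int]_m.+1 :=
  \matrix_(i, j) (c (i - j) * (if (i < j)%N then 2 else 1)).

Lemma pow2_mulmx_col c j :
  \sum_(i < m.+1) x ^+ i * (pow2_mulmx c i j)%:~R =
  x ^+ j * \sum_(r < m.+1) (c r)%:~R * x ^+ r.
Proof.
rewrite (reindex_inj (@addIr _ j)) mulr_sumr; apply: eq_bigr => r _.
rewrite mxE addrK intrM (fun_if intr) rmorph1 rmorph_nat mulrCA exprZpD; ring.
Qed.

Lemma pow2_mulmx_det c :
  \sum_(r < m.+1) (c r)%:~R * x ^+ r = 0 -> \det (pow2_mulmx c) = 0.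
Proof.
move=> sum0; apply/eqP; rewrite -(intr_eq0 R) -det_map_mx.
apply/det0P; exists (\row_i x ^+ i).
  by apply/negP => /eqP/matrixP/(_ 0 0); rewrite !mxE expr0 => /eqP; rewrite oner_eq0.
apply/matrixP => i j; rewrite !mxE.
transitivity (x ^+ j * \sum_(r < m.+1) (c r)%:~R * x ^+ r); last by rewrite sum0 mulr0.
by rewrite -pow2_mulmx_col; apply: eq_bigr => k _; rewrite !mxE.
Qed.

Lemma pow2_mulmx_det_odd c : ~~ (2 %| c ord0)%Z -> ~~ (2 %| \det (pow2_mulmx c))%Z.
Proof.
have F2 := pchar_Fp (isT : prime 2).
rewrite !(dvdz_pcharf F2) -det_map_mx det_trig => [c0_odd|].
  by apply/prodf_neq0 => i _; rewrite !mxE subrr ltnn mulr1.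
apply/is_trig_mxP => i j ij; rewrite !mxE ij rmorphM rmorph_nat /=.
by rewrite (pcharf0 F2) mulr0.
Qed.

(* [x ^+ k = 2 ^+ (k %/ m.+1) * x ^+ (k %% m.+1)] *)
Definition pow2_fold K a r : int :=
  \sum_(k < K | inZp k == r) a k * 2 ^+ (k %/ m.+1).

Lemma sum_expr_pow2_fold K a :
  \sum_(k < K) (a k)%:~R * x ^+ k = \sum_(r < m.+1) (pow2_fold K a r)%:~R * x ^+ r.
Proof.
rewrite (partition_big (fun k : 'I_K => inZp k : 'I_m.+1) xpredT) //=.
apply: eq_bigr => r _.
rewrite rmorph_sum mulr_suml; apply: eq_bigr => k /eqP <-.
rewrite rmorphM rmorphXn rmorph_nat -mulrA; congr (_ * _).
by rewrite {1}(divn_eq k m.+1) exprD mulnC exprM x_pow.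
Qed.

Lemma pow2_fold_odd K a (K_gt0 : (0 < K)%N) :
  ~~ (2 %| a 0%N)%Z -> ~~ (2 %| pow2_fold K a ord0)%Z.
Proof.
rewrite /pow2_fold (bigD1 (Ordinal K_gt0)) //= div0n expr0 mulr1 rpredDr //.
apply: rpred_sum => k /andP[/eqP/(congr1 val)/= k_mod k_ne0].
have q_gt0 : (0 < k %/ m.+1)%N.
  rewrite lt0n; apply: contra k_ne0 => /eqP q0; apply/eqP/val_inj => /=.
  by rewrite (divn_eq k m.+1) q0 k_mod.
by rewrite -(prednK q_gt0) exprS dvdz_mull // dvdz_mulr.
Qed.

Lemma sum_expr_odd0_neq0 K a :
  (0 < K)%N -> ~~ (2 %| a 0%N)%Z -> \sum_(k < K) (a k)%:~R * x ^+ k != 0.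
Proof.
move=> K_gt0 a0_odd; rewrite sum_expr_pow2_fold; apply/eqP => /pow2_mulmx_det det0.
by have := pow2_mulmx_det_odd (pow2_fold_odd K_gt0 a0_odd); rewrite det0 dvdz0.
Qed.

Lemma odd_const_nroot (q : {poly int}) :
  ~~ (2 %| q`_0)%Z -> ~~ root (map_poly intr q) x.
Proof.
move=> q0_odd; rewrite /root (@horner_coef_wide _ (size q).+1); last first.
  by rewrite size_map_inj_poly ?rmorph0 //; exact: intr_inj.
under eq_bigr do rewrite coef_map.
exact: sum_expr_odd0_neq0.
Qed.
End PowerEqualTwo.

Lemma two_lt_exprD (R : realDomainType) (x : R) m k :
  1 < x -> m != k -> 2 < x ^+ m + x ^+ k.
Proof.
move=> x_gt1 mk; have x_ge1 n : 1 <= x ^+ n := exprn_ege1 n (ltW x_gt1).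
case: m mk => [|m] mk.
  have : 1 < x ^+ k by rewrite exprn_egt1 // eq_sym.
  rewrite expr0; lra.
have : 1 < x ^+ m.+1 by rewrite exprn_egt1.
have := x_ge1 k; lra.
Qed.

Lemma Zrho_two (R : realType) (rho : R) :
  1 < rho -> Zrho rho 2 -> exists m, rho ^+ m.+1 = 2.
Proof.
move=> rho_gt1 [n [z]]; rewrite big_mkord => two_sum.
have term_ge0 (k : 'I_n.+1) : 0 <= (z k)%:R * rho ^+ k.
  by rewrite mulr_ge0 ?exprn_ge0 // (le_trans ler01 (ltW rho_gt1)).
have [m zm|z0] := pickP (fun k : 'I_n.+1 => z k); last first.
  by move: two_sum; rewrite big1 => [/eqP|k _]; rewrite ?pnatr_eq0 // z0 mul0r.
have others0 (k : 'I_n.+1) : k != m -> z k = false.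
  move=> km; apply/negbTE/negP => zk.
  have mk : nat_of_ord m != k by rewrite val_eqE eq_sym.
  have := two_lt_exprD rho_gt1 mk; rewrite ltNge => /negP; apply.
  rewrite two_sum (bigD1 m) // (bigD1 k) //= zm zk !mul1r addrA lerDl.
  by apply: sumr_ge0 => i _; apply: term_ge0.
move: two_sum; rewrite (bigD1 m) //= zm mul1r big1 ?addr0 => [|k /others0 ->]; last first.
  by rewrite mul0r.
case: (nat_of_ord m) => [|m'] two_pow; last by exists m'.
by move: two_pow; rewrite expr0; lra.
Qed.

Definition beta_poly_int N (b : nat -> bool) : {poly int} :=
  'X^N - \sum_(1 <= j < N.+1) (b j)%:R *: 'X^(N - j).

Lemma beta_polyE (R : realType) N b :
  beta_poly R N b = map_poly intr (beta_poly_int N b).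
Proof.
rewrite rmorphB rmorph_sum /= map_polyXn; congr (_ - _); apply: eq_bigr => j _.
by rewrite map_polyZ map_polyXn rmorph_nat.
Qed.

Lemma beta_poly_int_coef0 N b : (0 < N)%N -> (beta_poly_int N b)`_0 = - (b N)%:R.
Proof.
move=> N_gt0; rewrite coefB coefXn coef_sum big_nat_recr //= subnn coefZ coefXn.
rewrite (ltn_eqF N_gt0) big1_seq ?add0r ?eqxx ?mulr1 ?sub0r // => j.
rewrite mem_index_iota => j_range.
by rewrite coefZ coefXn (_ : (0 == N - j)%N = false) ?mulr0 //; lia.
Qed.

Lemma sum_exp2n_lt N : (\sum_(k < N) 2 ^ k < 2 ^ N)%N.
Proof.
by elim: N => [|N IH]; rewrite ?big_ord0 // big_ord_recr expnS mul2n -addnn ltn_add2r.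
Qed.

Lemma beta_weight_lt N (b : nat -> bool) :
  (\sum_(1 <= j < N.+1) b j * 2 ^ (N - j) < 2 ^ N)%N.
Proof.
apply: leq_ltn_trans (sum_exp2n_lt N).
rewrite big_add1 /= big_nat_rev /= big_mkord; apply: leq_sum => k _.
by case: (b _); rewrite ?mul1n ?mul0n // leq_pexp2l //; lia.
Qed.

Lemma beta_count_gt1 N (b : nat -> bool) : (0 < N)%N -> b N ->
  (1 < \sum_(1 <= j < N.+1) b j * 2 ^ (N - j))%N -> (1 < \sum_(1 <= j < N.+1) b j)%N.
Proof.
move=> N_gt0 bN; rewrite !big_nat_recr //= bN subnn expn0 muln1.
have : (\sum_(1 <= j < N) b j * 2 ^ (N - j) <= (\sum_(1 <= j < N) b j) * 2 ^ N)%N.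
  rewrite big_distrl /=; apply: leq_sum => j _.
  by rewrite leq_mul2l leq_pexp2l ?leq_subr ?orbT.
case: (\sum_(1 <= j < N) b j)%N => [|s]; lia.
Qed.

Lemma horner_beta_poly (R : realType) N b (x : R) :
  (beta_poly R N b).[x] = x ^+ N - \sum_(1 <= j < N.+1) (b j)%:R * x ^+ (N - j).
Proof.
rewrite hornerD hornerN hornerXn horner_sum; congr (_ - _).
by apply: eq_bigr => j _; rewrite hornerZ hornerXn.
Qed.

Lemma beta_root_gt1 (R : realType) N (b : nat -> bool) (rho : R) : (0 < N)%N -> b N ->
  (1 < \sum_(1 <= j < N.+1) b j * 2 ^ (N - j))%N ->
  largest_real_root (beta_poly R N b) rho -> 1 < rho.
Proof.
move=> N_gt0 bN weight_gt1 [_ rho_max].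
have p1_lt0 : (beta_poly R N b).[1] < 0.
  rewrite horner_beta_poly expr1n subr_lt0.
  under eq_bigr do rewrite expr1n mulr1.
  by rewrite -natr_sum (ltr_nat R 1) beta_count_gt1.
have p2_ge0 : 0 <= (beta_poly R N b).[2].
  rewrite horner_beta_poly subr_ge0.
  under eq_bigr do rewrite -natrX -natrM.
  by rewrite -natr_sum -natrX ler_nat ltnW ?beta_weight_lt.
have p_sign : (beta_poly R N b).[1] <= 0 <= (beta_poly R N b).[2] by rewrite ltW.
have [x /andP[x_ge1 _] x_root] := poly_ivt (ler1n R 2) p_sign.
apply: lt_le_trans (rho_max x x_root); rewrite lt_neqAle x_ge1 andbT.
by apply: contraTneq x_root => <-; rewrite /root lt_eqF.
Qed.

Theorem mainTheorem8 (R : realType) (N : nat) (b : nat -> bool) (rho : R) :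
  (2 <= N)%N ->
  b N = true ->
  (1 < \sum_(1 <= j < N.+1) b j * 2 ^ (N - j))%N ->
  largest_real_root (beta_poly R N b) rho ->
  ~ Zrho rho 2.
Proof.
move=> N_ge2 bN weight_gt1 rho_max two_in_Zrho.
have N_gt0 : (0 < N)%N by apply: ltnW.
have [m rho_pow] := Zrho_two (beta_root_gt1 N_gt0 bN weight_gt1 rho_max) two_in_Zrho.
have const_odd : ~~ (2 %| (beta_poly_int N b)`_0)%Z by rewrite beta_poly_int_coef0 // bN.
by have := odd_const_nroot rho_pow const_odd; rewrite -beta_polyE; case: rho_max => ->.
Qed.
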